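(* Let $M\ge 1$ users be located at $\boldsymbol\psi_m=(x_m,y_m,0)$, $1\le m\le M$, with $-\frac{D_{\rm L}}{2}\le x_m\le \frac{D_{\rm L}}{2}$ and $-\frac{D_{\rm W}}{2}\le y_m\le \frac{D_{\rm W}}{2}$, and let a single antenna be placed at $(x,0,d)$ with $d>0$. For transmit powers $P_m\ge 0$ define $$R_m^{\rm OMA}=\frac{1}{M}\log\left(1+\frac{\eta P_m}{\sigma^2\big((x-x_m)^2+y_m^2+d^2\big)}\right),$$ where $\eta>0$, $\sigma^2>0$. Consider the problem $$\max_{P_1,\dots,P_M\ge 0,\ x}\ \min\{R_1^{\rm OMA},\dots,R_M^{\rm OMA}\}\quad\text{s.t.}\quad \sum_{m=1}^M P_m\le P,\quad -\frac{D_{\rm L}}{2}\le x\le \frac{D_{\rm L}}{2},$$ with $P>0$. Then an optimal antenna location is $$x^*=\frac{1}{M}\sum_{m=1}^M x_m,$$ and the optimal transmit powers are $$P_m^*=\frac{\tau_{mx^*}}{\sum_{i=1}^M\tau_{ix^*}}P,\qquad 1\le m\le M,$$ where $\tau_{mx^*}=(x^*-x_m)^2+y_m^2+d^2$.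
   Context: This models a pinching-antenna system: a single pinching antenna activated at point $(x,0,d)$ on a waveguide at height $d$ above the centre line of a rectangular service area of sides $D_{\rm L}$ (along the waveguide) and $D_{\rm W}$; users are served by time-division multiple access over $M$ slots (hence the factor $1/M$). $\eta=\frac{c^2}{16\pi^2 f_c^2}$ with $c$ the speed of light and $f_c$ the carrier frequency; $\sigma^2$ is the noise power; $\log$ is the natural logarithm. *)

From mathcomp Require Import all_boot all_order all_algebra.
From mathcomp Require Import reals exp.
Set Implicit Arguments. Unset Strict Implicit. Unset Printing Implicit Defensive.
Import Order.TTheory GRing.Theory Num.Theory.
Local Open Scope ring_scope.

(* tau = (x - x_m)^2 + y_m^2 + d^2 : squared distance antenna (x,0,d) to user (x_m,y_m,0) *)
Definition tau {R : realType} (x xm ym d : R) : R := (x - xm) ^+ 2 + ym ^+ 2 + d ^+ 2.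

Definition rate_OMA {R : realType} (M : nat) (eta sigma2 Pm x xm ym d : R) : R :=
  M%:R^-1 * ln (1 + eta * Pm / (sigma2 * tau x xm ym d)).

Definition min_seq {R : realType} (s : seq R) : R := foldr Num.min (head 0 s) s.

Definition min_rate {R : realType} (M : nat) (eta sigma2 d : R) (xs ys : 'I_M -> R)
  (Ps : 'I_M -> R) (x : R) : R :=
  min_seq [seq rate_OMA M eta sigma2 (Ps m) x (xs m) (ys m) d | m <- enum 'I_M].

(* Only the ratio P_m / tau_m matters for user m, and the rate is increasing in it.
   If the powers sum to at most P, some user gets P_m / tau_m(x) <= P / S(x), where
   S(x) = sum_m tau_m(x); this bounds the min-rate of any configuration.  S(x) is
   a sum of squared deviations plus a constant, so it is smallest at the mean x*.
   The powers P_m* = P tau_m / S, taken at x*, give every user the ratio P / S at x*,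
   so all rates coincide and attain the bound. *)

From mathcomp Require Import all_boot all_order all_algebra.
From mathcomp Require Import reals exp.
From mathcomp Require Import ring.
Import Order.TTheory GRing.Theory Num.Theory.
Local Open Scope ring_scope.

Lemma min_seq_le {R : realType} (s : seq R) (v : R) : v \in s -> min_seq s <= v.
Proof.
rewrite /min_seq; elim: s (head 0 s) => [|a s IH] h //=.
rewrite in_cons => /orP [/eqP ->|vs]; first by rewrite ge_min lexx.
by rewrite ge_min (IH h vs) orbT.
Qed.

Lemma min_seq_ge {R : realType} (s : seq R) (v : R) :
  s != [::] -> {in s, forall y, v <= y} -> v <= min_seq s.
Proof.
case: s => [|a s] // _ lbs; have va : v <= a by rewrite lbs ?mem_head.
rewrite /min_seq /= le_min va /=.
have {}lbs : {in s, forall y, v <= y} by move=> y ys; rewrite lbs // in_cons ys orbT.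
elim: s lbs => [|b s IH] lbs //=.
by rewrite le_min lbs ?mem_head // IH // => y ys; rewrite lbs // in_cons ys orbT.
Qed.

Lemma mean_in_itv {R : numFieldType} (M : nat) (a b : R) (f : 'I_M -> R) :
  (0 < M)%N -> (forall i, a <= f i <= b) -> a <= M%:R^-1 * \sum_(i < M) f i <= b.
Proof.
move=> M_gt0 fab; have M_pos : (0 : R) < M%:R by rewrite ltr0n.
have lo : \sum_(i < M) a <= \sum_(i < M) f i.
  by apply: ler_sum => i _; case/andP: (fab i).
have hi : \sum_(i < M) f i <= \sum_(i < M) b.
  by apply: ler_sum => i _; case/andP: (fab i).
rewrite sumr_const card_ord -mulr_natl in lo.
rewrite sumr_const card_ord -mulr_natl in hi.
by rewrite ler_pdivlMl // ler_pdivrMl // lo hi.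
Qed.

(* Expanding around the mean kills the cross term, since deviations from the mean sum to zero. *)
Lemma sum_sqr_dev {R : realFieldType} (M : nat) (a : 'I_M -> R) (x : R) :
  let mean := M%:R^-1 * \sum_(i < M) a i in
  \sum_(i < M) (x - a i) ^+ 2 = \sum_(i < M) (mean - a i) ^+ 2 + (x - mean) ^+ 2 *+ M.
Proof.
move=> mean; case: M a @mean => [|M] a mean; first by rewrite !big_ord0 mulr0n addr0.
have dev0 : \sum_(i < M.+1) (mean - a i) = 0.
  by rewrite sumrB sumr_const card_ord -[(_ * _) *+ _]mulr_natl mulrA mulfV ?mul1r
    ?subrr // pnatr_eq0.
rewrite (eq_bigr (fun i =>
    (mean - a i) ^+ 2 + (x - mean) ^+ 2 + 2 * (x - mean) * (mean - a i))); last first.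
  by move=> i _; ring.
by rewrite !big_split /= sumr_const card_ord -mulr_sumr dev0 mulr0 addr0.
Qed.

Lemma sum_sqr_dev_ge {R : realFieldType} (M : nat) (a : 'I_M -> R) (x : R) :
  \sum_(i < M) (M%:R^-1 * \sum_(j < M) a j - a i) ^+ 2 <= \sum_(i < M) (x - a i) ^+ 2.
Proof. by rewrite sum_sqr_dev lerDl mulrn_wge0 // sqr_ge0. Qed.

Lemma exists_ratio_le_share {R : realFieldType} {I : finType} (i0 : I)
    (p w : I -> R) (P : R) :
  (forall i, 0 < w i) -> \sum_i p i <= P ->
  exists i, p i / w i <= P / \sum_j w j.
Proof.
move=> w_gt0 sum_le; set W := \sum_j w j.
have W_gt0 : 0 < W by rewrite /W (bigD1 i0) //= ltr_pwDl // sumr_ge0 // => i _; apply/ltW.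
case: (pickP [pred i | p i / w i <= P / W]) => [i le_i | none]; first by exists i.
have lt_i i : P * w i < p i * W.
  by move: (none i) => /= /negbT; rewrite -ltNge ltr_pdivrMr // mulrAC ltr_pdivlMr.
have : P * W < (\sum_i p i) * W.
  rewrite /W mulr_sumr mulr_suml (bigD1 i0) //= [X in _ < X](bigD1 i0) //= ltr_leD //.
  by apply: ler_sum => i _; apply/ltW.
by rewrite ltNge ler_pM2r // sum_le.
Qed.

Lemma tau_gt0 {R : realType} (x xm ym d : R) : 0 < d -> 0 < tau x xm ym d.
Proof.
by move=> d_gt0; apply: ltr_wpDl; [rewrite addr_ge0 ?sqr_ge0 | rewrite exprn_gt0].
Qed.

Lemma sum_tau_ge_mean {R : realType} (M : nat) (d x : R) (xs ys : 'I_M -> R) :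
  \sum_(i < M) tau (M%:R^-1 * \sum_(j < M) xs j) (xs i) (ys i) d
  <= \sum_(i < M) tau x (xs i) (ys i) d.
Proof.
rewrite /tau !big_split /= lerD2r lerD2r.
exact: sum_sqr_dev_ge.
Qed.

Definition rate_of_ratio {R : realType} (M : nat) (eta sigma2 r : R) : R :=
  M%:R^-1 * ln (1 + eta / sigma2 * r).

Section Rate.
Context {R : realType} (M : nat) {eta sigma2 d : R}.
Hypotheses (eta_gt0 : 0 < eta) (sigma2_gt0 : 0 < sigma2) (d_gt0 : 0 < d).

Lemma rate_OMA_ratio (r x xm ym : R) :
  rate_OMA M eta sigma2 (r * tau x xm ym d) x xm ym d = rate_of_ratio M eta sigma2 r.
Proof.
rewrite /rate_OMA /rate_of_ratio; congr (_ * ln (1 + _)).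
by field; rewrite !gt_eqF ?tau_gt0.
Qed.

Lemma rate_OMA_le {Pm x xm ym r : R} :
  0 <= Pm -> Pm / tau x xm ym d <= r ->
  rate_OMA M eta sigma2 Pm x xm ym d <= rate_of_ratio M eta sigma2 r.
Proof.
move=> Pm_ge0 le_r; have tau_pos := tau_gt0 x xm ym d d_gt0.
have q_ge0 : 0 <= Pm / tau x xm ym d by rewrite divr_ge0 // ltW.
have c_ge0 : 0 <= eta / sigma2 by rewrite divr_ge0 // ltW.
have snr_pos (s : R) : 0 <= s -> 1 + eta / sigma2 * s \is Num.pos.
  by move=> s_ge0; rewrite posrE; apply: ltr_wpDr; [exact: mulr_ge0 | exact: ltr01].
rewrite -[Pm](@divfK _ (tau x xm ym d)) ?gt_eqF // rate_OMA_ratio.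
rewrite ler_wpM2l ?invr_ge0 ?ler0n //.
by rewrite ler_ln ?snr_pos ?(le_trans q_ge0) // lerD2l ler_wpM2l.
Qed.

End Rate.

Theorem lemma1 (R : realType) (M : nat) (DL DW d eta sigma2 P : R)
    (xs ys : 'I_M -> R) :
  (0 < M)%N -> 0 < d -> 0 < eta -> 0 < sigma2 -> 0 < P ->
  (forall m, - (DL / 2) <= xs m <= DL / 2) ->
  (forall m, - (DW / 2) <= ys m <= DW / 2) ->
  let xstar := M%:R^-1 * \sum_(m < M) xs m in
  let Pstar := fun m : 'I_M =>
    tau xstar (xs m) (ys m) d / (\sum_(i < M) tau xstar (xs i) (ys i) d) * P in
  [/\ (forall m, 0 <= Pstar m), \sum_(m < M) Pstar m <= P,
      - (DL / 2) <= xstar <= DL / 2 &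
      forall (Ps : 'I_M -> R) (x : R),
        (forall m, 0 <= Ps m) -> \sum_(m < M) Ps m <= P ->
        - (DL / 2) <= x <= DL / 2 ->
        min_rate eta sigma2 d xs ys Ps x <= min_rate eta sigma2 d xs ys Pstar xstar].
Proof.
move=> M_gt0 d_gt0 eta_gt0 sigma2_gt0 P_gt0 xs_itv _ xstar Pstar.
pose m0 : 'I_M := Ordinal M_gt0.
pose S x := \sum_(i < M) tau x (xs i) (ys i) d.
have S_gt0 x : 0 < S x.
  by rewrite /S (bigD1 m0) //= ltr_pwDl ?tau_gt0 // sumr_ge0 // => i _; rewrite ltW ?tau_gt0.
have Pstar_ratio m : Pstar m = P / S xstar * tau xstar (xs m) (ys m) d.
  by rewrite /Pstar mulrC mulrCA mulrC.
split.
- by move=> m; rewrite Pstar_ratio mulr_ge0 ?divr_ge0 ?ltW ?tau_gt0.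
- by rewrite /Pstar -!mulr_suml -/(S xstar) mulfV ?mul1r ?gt_eqF.
- exact: mean_in_itv.
move=> Ps x Ps_ge0 sum_le _.
have tau_x_gt0 i : 0 < tau x (xs i) (ys i) d by exact: tau_gt0.
have [m le_share] := exists_ratio_le_share m0 _ _ _ tau_x_gt0 sum_le.
rewrite /min_rate; apply: (@le_trans _ _ (rate_OMA M eta sigma2 (Ps m) x (xs m) (ys m) d)).
  by apply/min_seq_le/mapP; exists m; rewrite ?mem_enum.
have share_le : P / S x <= P / S xstar.
  by rewrite ler_wpM2l ?(ltW P_gt0) // lef_pV2 ?posrE ?S_gt0 // sum_tau_ge_mean.
apply: (le_trans (rate_OMA_le M eta_gt0 sigma2_gt0 d_gt0 (Ps_ge0 m)
  (le_trans le_share share_le))).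
apply: min_seq_ge => [|_ /mapP [i _ ->]]; first by rewrite -size_eq0 size_map size_enum_ord -lt0n.
by rewrite Pstar_ratio rate_OMA_ratio.
Qed.
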